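(* For any connected graph $G_n$ on $n$ nodes, the stopping time of the broadcast protocol $\mathcal{B_{RR}}$ with the round-robin communication model is $O(n)$ rounds. In the asynchronous time model this holds with probability at least $1-n(2/e)^{3n}$, and in the synchronous time model with probability $1$.
   Context: Broadcast ($1$-dissemination): a single message initially located at one node must reach all nodes; a node holding the message transmits it to its communication partner when it acts (\texttt{PUSH}, or \texttt{EXCHANGE}). Round-robin gossip: each node chooses its communication partner according to a fixed cyclic list of its neighbors, contacting them in this order in its successive actions. Asynchronous time model: each timeslot one node chosen independently and uniformly at random acts; $n$ timeslots form a round. Synchronous time model: in each round every node acts; information received in a round can be sent only from the next round. The stopping time is the number of rounds until all nodes hold the message. *)

From Stdlib Require Import Reals.
From mathcomp Require Import all_boot.

Set Implicit Arguments.
Unset Strict Implicit.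
Unset Printing Implicit Defensive.

Definition connected_graph (n : nat) (adj : rel 'I_n) : Prop :=
  symmetric adj /\ irreflexive adj /\ forall u v : 'I_n, connect adj u v.

Definition rr_lists (n : nat) (adj : rel 'I_n) (L : 'I_n -> seq 'I_n) : Prop :=
  forall v : 'I_n, uniq (L v) /\ forall u : 'I_n, (u \in L v) = adj v u.

Definition partner (n : nat) (L : 'I_n -> seq 'I_n) (v : 'I_n) (k : nat) : 'I_n :=
  nth v (L v) (k %% size (L v)).

(* One transmission when v contacts u. exch = false: PUSH (holder v sends to u);
   exch = true: EXCHANGE (message moves in both directions). *)
Definition transmit (n : nat) (exch : bool) (I : {set 'I_n}) (v u : 'I_n) : {set 'I_n} :=
  if v \in I then u |: I
  else if exch && (u \in I) then v |: I else I.

(* Asynchronous model: state = (informed set, number of past actions per node). *)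
Definition async_step (n : nat) (exch : bool) (L : 'I_n -> seq 'I_n)
    (st : {set 'I_n} * ('I_n -> nat)) (v : 'I_n) : {set 'I_n} * ('I_n -> nat) :=
  let: (Inf, c) := st in
  (transmit exch Inf v (partner L v (c v)),
   fun w => if w == v then (c w).+1 else c w).

Definition async_informed (n : nat) (exch : bool) (L : 'I_n -> seq 'I_n)
    (src : 'I_n) (s : seq 'I_n) : {set 'I_n} :=
  (foldl (async_step exch L) ([set src], fun _ => 0%N) s).1.

(* Probability that all nodes are informed after R rounds (= R*n timeslots),
   actors chosen independently and uniformly: counting over all actor sequences. *)
Definition async_success_prob (n : nat) (exch : bool) (L : 'I_n -> seq 'I_n)
    (src : 'I_n) (rounds : nat) : R :=
  Rdiv (INR #|[set f : {ffun 'I_(rounds * n) -> 'I_n} |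
            async_informed exch L src [seq f i | i <- enum 'I_(rounds * n)] == [set: 'I_n]]|)
       (INR (n ^ (rounds * n))).

(* Synchronous model: in round r (0-indexed) every node performs its r-th
   action; only nodes informed at the start of the round transmit. *)
Definition sync_round (n : nat) (exch : bool) (L : 'I_n -> seq 'I_n)
    (r : nat) (I : {set 'I_n}) : {set 'I_n} :=
  [set w | [|| w \in I,
              [exists v, (v \in I) && (partner L v r == w)]
            | exch && (partner L w r \in I)]].

Fixpoint sync_informed (n : nat) (exch : bool) (L : 'I_n -> seq 'I_n)
    (src : 'I_n) (rounds : nat) : {set 'I_n} :=
  match rounds with
  | 0 => [set src]
  | r.+1 => sync_round exch L r (sync_informed exch L src r)
  end.

From Stdlib Require Import Reals Lra.
From mathcomp Require Import all_boot zify.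

Set Implicit Arguments.
Unset Strict Implicit.
Unset Printing Implicit Defensive.

(* Fix a target w and a path src = v_0, ..., v_k = w admitting no shortcut, so
   that every node is adjacent to at most three of its nodes and the degrees
   of v_0, ..., v_(k-1) add up to at most 3n.  The potential of a
   configuration is the least, over informed v_i, of the number of actions
   v_i still needs under round robin to contact v_(i+1), plus the degrees of
   v_(i+1), ..., v_(k-1).  It starts at most 3n, never increases, vanishes
   only once w is informed, and while it is positive some node's action
   decreases it.  Synchronously every node acts in every round, so 3n rounds
   suffice.  Asynchronously, a run of N timeslots in which the potential stays
   positive is a word with fewer than 3n "hits"; weighting hits by 1/2, such
   words form a fraction at most 2^(3n) (1 - 1/(2n))^N <= (2/e)^(3n) of all
   words when N = 6n^2, and a union bound over w gives the theorem with C = 6. *)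

(* [few_hits m N K] counts the words of length [N] over [m.+1] letters, one
   letter of each position being a hit, that contain fewer than [K] hits. *)
Fixpoint few_hits (m N K : nat) : nat :=
  if N is N'.+1 then few_hits m N' K.-1 + m * few_hits m N' K else 0 < K.

Lemma few_hits0 m N : few_hits m N 0 = 0.
Proof. by elim: N => //= N ->; rewrite muln0. Qed.

Lemma few_hits_mono m N : {homo few_hits m N : K K' / K <= K'}.
Proof.
elim: N => [|N IH] K K' leKK' /=; first by case: K leKK' => //; case: K'.
by rewrite leq_add ?leq_mul2l ?IH ?orbT // -!subn1 leq_sub2r.
Qed.

(* Weighting a hit by 1/2 and a miss by 1: the words counted carry weight at
   least 2^-K, while all words together weigh (1/2 + m)^N. *)
Lemma few_hits_bound m N K : 2 ^ N * few_hits m N K <= 2 ^ K * (2 * m + 1) ^ N.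
Proof.
elim: N K => [|N IH] [|K] /=; rewrite ?few_hits0 ?muln0 //.
  by rewrite !expn0 mul1n muln1 expn_gt0.
have := IH K; have := IH K.+1; rewrite !expnS; nia.
Qed.

Section FfunCons.

Variable T : Type.

Definition ffun_cons N (p : T * {ffun 'I_N -> T}) : {ffun 'I_N.+1 -> T} :=
  [ffun i => if unlift ord0 i is Some j then p.2 j else p.1].

Definition ffun_uncons N (g : {ffun 'I_N.+1 -> T}) : T * {ffun 'I_N -> T} :=
  (g ord0, [ffun j => g (lift ord0 j)]).

Lemma ffun_consK N : cancel (@ffun_cons N) (@ffun_uncons N).
Proof.
case=> a g; rewrite /ffun_uncons /ffun_cons /= ffunE unlift_none; congr pair.
by apply/ffunP=> j; rewrite !ffunE liftK.
Qed.

Lemma ffun_unconsK N : cancel (@ffun_uncons N) (@ffun_cons N).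
Proof.
move=> g; apply/ffunP=> i; rewrite ffunE /=.
by case: unliftP => [j|] ->; rewrite ?ffunE.
Qed.

Lemma map_ffun_cons N p :
  [seq ffun_cons p i | i <- enum 'I_N.+1] = p.1 :: [seq p.2 i | i <- enum 'I_N].
Proof.
rewrite enum_ordSl /= -map_comp ffunE unlift_none; congr cons.
by apply: eq_map => j /=; rewrite ffunE liftK.
Qed.

End FfunCons.

Section RunsWithPotential.

Variables (S : Type) (n : nat) (step : S -> 'I_n -> S) (pot : S -> nat).

Definition run N (s : S) (g : {ffun 'I_N -> 'I_n}) : S :=
  foldl step s [seq g i | i <- enum 'I_N].

Definition unfinished_runs N (s : S) : nat :=
  \sum_(g : {ffun 'I_N -> 'I_n}) (0 < pot (run s g)).

Lemma unfinished_runsS N s :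
  unfinished_runs N.+1 s = \sum_(a : 'I_n) unfinished_runs N (step s a).
Proof.
rewrite /unfinished_runs (reindex (@ffun_cons _ N)); last first.
  by exists (@ffun_uncons _ N) => x _; [apply: ffun_consK | apply: ffun_unconsK].
rewrite pair_bigA; apply: eq_bigr => -[a g] _.
by rewrite /run (map_ffun_cons (a, g)).
Qed.

Variable B : nat.
Hypothesis pot_step_le : forall s a, pot (step s a) <= pot s.
Hypothesis pot_step_lt : forall s, 0 < pot s < B -> exists a, pot (step s a) < pot s.

(* Below [B] some letter lowers the potential; it plays the role of the hit. *)
Lemma unfinished_runs_le N s : pot s < B -> unfinished_runs N s <= few_hits n.-1 N (pot s).
Proof.
elim: N s => [|N IH] s ltsB.
  rewrite /unfinished_runs /run enum_ord0 /= sum_nat_const card_ffun !card_ord.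
  by rewrite expn0 mul1n; case: (pot s).
have IHa a : unfinished_runs N (step s a) <= few_hits n.-1 N (pot (step s a)).
  exact/IH/(leq_ltn_trans (pot_step_le s a)).
rewrite unfinished_runsS /=; case: (posnP (pot s)) => [pot0|pot_gt0].
  rewrite big1 // => a _; apply/eqP; rewrite -leqn0 -(few_hits0 n.-1 N).
  by have := pot_step_le s a; rewrite pot0 leqn0 => /eqP <-.
have [a0 lta0] : exists a, pot (step s a) < pot s by apply: pot_step_lt; rewrite pot_gt0.
rewrite (bigD1 a0) //=; apply: leq_add.
  by apply: leq_trans (IHa a0) _; apply: few_hits_mono; rewrite -ltnS prednK.
apply: leq_trans (_ : \sum_(a | a != a0) few_hits n.-1 N (pot s) <= _).
  by apply: leq_sum => a _; apply: leq_trans (IHa a) (few_hits_mono _ _ _).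
rewrite sum_nat_cond_const.
have <- : [set~ a0] = [set a | a != a0] by apply/setP => x; rewrite !inE.
by rewrite cardsC1 card_ord.
Qed.

End RunsWithPotential.

Lemma split_first_hit (T : Type) (a : pred T) (s : seq T) : 0 < count a s ->
  exists s1 x s2, [/\ s = s1 ++ x :: s2, a x & count a s2 = (count a s).-1].
Proof.
elim: s => //= y s IH; case ay: (a y) => /= cnt_gt0; first by exists [::], y, s.
by have [s1 [x [s2 [-> ax cnt2]]]] := IH cnt_gt0; exists (y :: s1), x, s2.
Qed.

(* A node adjacent to four nodes of a path gives a shortcut skipping the two
   middle ones. *)
Lemma path_shortcut (T : eqType) (e : rel T) x0 p u :
  symmetric e -> path e x0 p -> 3 < count (e u) (x0 :: p) ->
  exists p', [/\ path e x0 p', size p' < size p & last x0 p' = last x0 p].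
Proof.
move=> e_sym ep cnt4.
have [s1 [x [r [def_s ex cnt_r]]]] := split_first_hit (ltnW (ltnW (ltnW cnt4))).
have [r1 [z1 [r' [def_r _ cnt_r']]]] := @split_first_hit _ (e u) r ltac:(lia).
have [r2 [z2 [r'' [def_r' _ cnt_r'']]]] := @split_first_hit _ (e u) r' ltac:(lia).
have [r3 [y [s3 [def_r'' ey _]]]] := @split_first_hit _ (e u) r'' ltac:(lia).
have {}def_s : x0 :: p = s1 ++ x :: r1 ++ z1 :: r2 ++ z2 :: r3 ++ y :: s3.
  by rewrite def_s def_r def_r' def_r''.
have path_drop a l b t : path e a (l ++ b :: t) -> path e b t.
  by rewrite cat_path /= => /and3P [].
have e_x_u_y : path e x [:: u, y & s3].
  move: ep; rewrite -/(sorted e (x0 :: p)) def_s sorted_cat_cons /= e_sym ex ey.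
  by move=> /andP [_ /path_drop/path_drop/path_drop ->].
case: s1 def_s => [[ex0 def_p]|x1 s1 [ex1 def_p]]; subst x0.
  exists [:: u, y & s3]; rewrite def_p; split=> //.
    by rewrite !size_cat /= !size_cat /= size_cat /=; lia.
  by rewrite !(last_cat, last_cons).
exists (s1 ++ [:: x, u, y & s3]); split.
- move: ep; rewrite def_p !cat_path /= => /and3P [-> -> _].
  exact: e_x_u_y.
- by rewrite def_p !size_cat /= !size_cat /= !size_cat /= size_cat /=; lia.
- by rewrite def_p !(last_cat, last_cons).
Qed.

Lemma exists_sparse_path (T : finType) (e : rel T) x y : symmetric e -> connect e x y ->
  exists p, [/\ path e x p, last x p = y & forall u, count (e u) (x :: p) <= 3].
Proof.
move=> e_sym /connectP [p ep ->].
have [k] := ubnP (size p); elim: k => // k IH in p ep *; rewrite ltnS => szp.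
have [sparse|] := boolP [forall u, count (e u) (x :: p) <= 3].
  by exists p; split=> // u; apply: (forallP sparse).
rewrite negb_forall => /existsP [u]; rewrite -ltnNge => /(path_shortcut e_sym ep).
by case=> p1 [ep1 szp1 <-]; apply: IH ep1 (leq_trans szp1 szp).
Qed.

Section RoundRobinPotential.

Variables (n : nat) (L : 'I_n -> seq 'I_n).

Definition rr_wait (v u : 'I_n) (k : nat) : nat :=
  find (fun j => partner L v (k + j) == u) (iota 0 (size (L v))).

Lemma rr_wait_spec v u k : u \in L v ->
  rr_wait v u k < size (L v) /\ partner L v (k + rr_wait v u k) = u.
Proof.
move=> uLv; set m := size (L v).
have m_gt0 : 0 < m by rewrite /m; case: (L v) uLv.
set j := (index u (L v) + m - k %% m) %% m.
have partner_j : partner L v (k + j) = u.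
  rewrite /partner -/m /j modnDmr.
  have -> : (k + (index u (L v) + m - k %% m)) %% m = index u (L v).
    have ltkm := ltn_pmod k m_gt0; rewrite {1}(divn_eq k m).
    have -> : k %/ m * m + k %% m + (index u (L v) + m - k %% m)
              = (k %/ m).+1 * m + index u (L v) by lia.
    by rewrite modnMDl modn_small // index_mem.
  by rewrite nth_index.
have has_j : has (fun j => partner L v (k + j) == u) (iota 0 m).
  by apply/hasP; exists j; rewrite ?mem_iota ?partner_j //= ltn_mod.
have lt_wait : rr_wait v u k < m by rewrite -[X in _ < X](size_iota 0 m) -has_find.
by split=> //; have := nth_find 0 has_j; rewrite nth_iota // => /eqP.
Qed.

Lemma partner_rr_wait0 v u k : u \in L v -> rr_wait v u k = 0 -> partner L v k = u.
Proof. by move=> /(rr_wait_spec k) [_ + wait0]; rewrite wait0 addn0. Qed.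

Lemma rr_waitS v u k : u \in L v -> 0 < rr_wait v u k -> rr_wait v u k.+1 < rr_wait v u k.
Proof.
move=> /(rr_wait_spec k) [lt_wait partner_wait] wait_gt0.
suff : ~~ ((rr_wait v u k).-1 < rr_wait v u k.+1) by lia.
apply/negP => /(before_find 0); rewrite nth_iota; last by lia.
by rewrite add0n addSnnS prednK // partner_wait eqxx.
Qed.

Definition rr_chain (p : seq 'I_n) : bool := sorted (fun v u => u \in L v) p.

Fixpoint chain_weight (p : seq 'I_n) : nat :=
  if p is v :: (_ :: _) as q then size (L v) + chain_weight q else 0.

(* A configuration is an informed set [I] with action counters [c]: node [v]
   has already acted [c v] times. *)
Definition link_cost (v : 'I_n) (q : seq 'I_n) (c : 'I_n -> nat) : nat :=
  if q is u :: _ then (rr_wait v u (c v)).+1 + chain_weight q else 0.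

Variable B : nat.

(* [B] stands for infinity: no node of the chain is informed. *)
Fixpoint potential (p : seq 'I_n) (I : {set 'I_n}) (c : 'I_n -> nat) : nat :=
  if p is v :: q then minn (if v \in I then link_cost v q c else B) (potential q I c)
  else B.

(* [(I', c')] knows at least what [a] pushes in its next action from [(I, c)]:
   a PUSH or EXCHANGE timeslot of [a], as well as a synchronous round. *)
Definition rr_action (a : 'I_n) (I : {set 'I_n}) (c : 'I_n -> nat)
    (I' : {set 'I_n}) (c' : 'I_n -> nat) : Prop :=
  [/\ I \subset I', c' a = (c a).+1 & a \in I -> partner L a (c a) \in I'].

Lemma potential_le p (I : {set 'I_n}) c : potential p I c <= B.
Proof. by elim: p => //= v q IH; rewrite geq_min IH orbT. Qed.

Lemma link_cost_le_weight v q c :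
  rr_chain (v :: q) -> link_cost v q c <= chain_weight (v :: q).
Proof.
by case: q => //= u q /andP [/(rr_wait_spec (c v)) [lt_wait _] _]; rewrite leq_add2r.
Qed.

(* Either [v] waits one action less for [u], or it has just informed [u]. *)
Lemma potential_lt_link_cost v u q (I I' : {set 'I_n}) c c' :
  rr_chain [:: v, u & q] -> v \in I -> rr_action v I c I' c' ->
  potential [:: v, u & q] I' c' < link_cost v (u :: q) c.
Proof.
move=> chain_vuq vI [subII' c'v push]; have uLv : u \in L v by case/andP: chain_vuq.
have vI' : v \in I' by apply: (subsetP subII').
have [wait0|wait_gt0] := posnP (rr_wait v u (c v)).
  have uI' : u \in I' by rewrite -(partner_rr_wait0 uLv wait0) push.
  apply: leq_ltn_trans (geq_minr _ _) _; rewrite /= uI'.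
  apply: leq_ltn_trans (geq_minl _ _) _.
  apply: leq_ltn_trans (link_cost_le_weight c' (path_sorted chain_vuq)) _.
  by rewrite /= wait0.
apply: leq_ltn_trans (geq_minl _ _) _; rewrite vI' /= c'v.
by rewrite ltn_add2r ltnS (rr_waitS uLv wait_gt0).
Qed.

Lemma potential_nonincr a p (I I' : {set 'I_n}) c c' :
  rr_chain p -> rr_action a I c I' c' -> (forall x, x != a -> c' x = c x) ->
  potential p I' c' <= potential p I c.
Proof.
move=> + act c'_eq; have [subII' _ _] := act.
elim: p => //= v q IH chain_vq; rewrite leq_min; apply/andP; split; last first.
  exact: leq_trans (geq_minr _ _) (IH (path_sorted chain_vq)).
case vI: (v \in I); last exact: leq_trans (geq_minr _ _) (potential_le _ _ _).
have vI' : v \in I' by apply: (subsetP subII').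
case: q IH chain_vq => [|u q] IH chain_vq.
  by apply: leq_trans (geq_minl _ _) _; rewrite vI'.
have [eq_av|nva] := eqVneq a v.
  by subst a; exact: ltnW (potential_lt_link_cost chain_vq vI act).
by apply: leq_trans (geq_minl _ _) _; rewrite vI' /link_cost c'_eq // eq_sym.
Qed.

Lemma potential_decr p (I : {set 'I_n}) c : rr_chain p -> 0 < potential p I c < B ->
  exists a, forall I' c', rr_action a I c I' c' -> potential p I' c' < potential p I c.
Proof.
elim: p => [|v q IH] chain_p /=; first by rewrite ltnn andbF.
have tail_decr : 0 < potential q I c < B -> exists a, forall I' c',
    rr_action a I c I' c' -> potential (v :: q) I' c' < potential q I c.
  move=> /(IH (path_sorted chain_p)) [a decr].
  by exists a => I' c' act; apply: leq_ltn_trans (geq_minr _ _) (decr _ _ act).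
case vI: (v \in I) => /=; first last.
  by rewrite (minn_idPr (potential_le _ _ _)) => /tail_decr.
have [le_cost|lt_tail] := leqP (link_cost v q c) (potential q I c); last first.
  exact: tail_decr.
move=> /andP [cost_gt0 _].
case: q {IH tail_decr} chain_p le_cost cost_gt0 => [|u q] // chain_p _ _.
by exists v => I' c'; apply: potential_lt_link_cost.
Qed.

Lemma potential_eq0 x0 p (I : {set 'I_n}) c :
  0 < B -> potential p I c = 0 -> last x0 p \in I.
Proof.
move=> /lt0n_neq0/negbTE B_neq0; elim: p x0 => [|v q IH] x0 /=.
  by move/eqP; rewrite B_neq0.
case: leqP => _; last by case: q IH => [|u q] IH /=; [move/eqP; rewrite B_neq0 | apply: IH].
by case: ifP => [vI|_ /eqP]; [case: q {IH} | rewrite B_neq0].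
Qed.

Lemma potential_source src q c : rr_chain (src :: q) ->
  potential (src :: q) [set src] c <= chain_weight (src :: q).
Proof. by move=> chain_q /=; rewrite in_set1 eqxx geq_min link_cost_le_weight. Qed.

End RoundRobinPotential.

Lemma chain_weight_le_sum n (L : 'I_n -> seq 'I_n) p :
  chain_weight L p <= \sum_(v <- p) size (L v).
Proof.
elim: p => [|v [|u p] IH]; rewrite ?big_nil // big_cons.
by rewrite [chain_weight _ _]/= leq_add2l.
Qed.

Lemma descent_reaches0 (P : nat -> nat) B : P 0 < B ->
  (forall r, 0 < P r < B -> P r.+1 < P r) -> exists2 r, r <= P 0 & P r = 0.
Proof.
move=> P0_lt decr.
have reach r : (exists2 r', r' <= r & P r' = 0) \/ P r + r <= P 0.
  elim: r => [|r [[r' le_r'r Pr'0]|IH]]; first by right; rewrite addn0.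
    by left; exists r' => //; apply: leqW.
  have [Pr0|Pr_gt0] := posnP (P r); first by left; exists r.
  have Pr_lt : P r < B by apply: leq_ltn_trans P0_lt; apply: leq_trans (leq_addr r _) IH.
  by have := decr r; rewrite Pr_gt0 Pr_lt => /(_ isT) lt_Pr; right; lia.
have [//|] := reach (P 0); rewrite -[leqRHS]add0n leq_add2r leqn0 => /eqP P0.
by exists (P 0).
Qed.

Lemma neq_setT_le_sum (T : finType) (A : {set T}) : (A != setT) <= \sum_x (x \notin A).
Proof.
have [//|] := eqVneq A setT; rewrite -properT => /properP [_ [x _ xA]].
by rewrite (bigD1 x) //= xA.
Qed.

Lemma sync_round_action n exch (L : 'I_n -> seq 'I_n) r (I : {set 'I_n}) a :
  rr_action L a I (fun=> r) (sync_round exch L r I) (fun=> r.+1).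
Proof.
split=> //; first by apply/subsetP => x xI; rewrite inE xI.
by move=> aI; rewrite inE; apply/or3P/Or32/existsP; exists a; rewrite aI eqxx.
Qed.

Lemma sync_informed_mono n exch (L : 'I_n -> seq 'I_n) src :
  {homo sync_informed exch L src : r r' / r <= r' >-> r \subset r'}.
Proof.
move=> r r'; elim: r' => [|r' IH]; first by rewrite leqn0 => /eqP ->.
rewrite leq_eqVlt ltnS => /predU1P [-> //|/IH sub]; apply: subset_trans sub _.
by have [] := sync_round_action exch L r' (sync_informed exch L src r') src.
Qed.

Lemma async_step_action n exch (L : 'I_n -> seq 'I_n) (I : {set 'I_n}) c a :
  rr_action L a I c (async_step exch L (I, c) a).1 (async_step exch L (I, c) a).2.
Proof.
split=> /=; [|by rewrite eqxx|by rewrite /transmit => ->; rewrite setU11].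
by rewrite /transmit; case: ifP => _; [|case: ifP => _]; rewrite ?subsetUr.
Qed.

Section Broadcast.

Variables (n : nat) (adj : rel 'I_n) (L : 'I_n -> seq 'I_n).
Hypotheses (adj_conn : connected_graph adj) (L_rr : rr_lists adj L).

Lemma size_rr_list v : size (L v) = \sum_(u : 'I_n) adj v u.
Proof.
have [uniqL memL] := L_rr v.
rewrite -(card_uniqP uniqL) -sum1_card big_mkcond /=.
by apply: eq_bigr => u _; rewrite memL; case: (adj v u).
Qed.

Lemma sparse_chain_weight p :
  (forall u, count (adj u) p <= 3) -> chain_weight L p <= 3 * n.
Proof.
have [adj_sym _] := adj_conn => sparse.
apply: leq_trans (chain_weight_le_sum L p) _.
rewrite (eq_bigr _ (fun v _ => size_rr_list v)) exchange_big /=.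
apply: leq_trans (_ : _ <= \sum_(u : 'I_n) 3) _.
  apply: leq_sum => u _; apply: leq_trans (sparse u).
  rewrite -sum1_count [in X in _ <= X]big_mkcond /=.
  by apply: eq_leq; apply: eq_bigr => v _; rewrite adj_sym.
by rewrite sum_nat_const card_ord mulnC.
Qed.

Lemma exists_light_chain src w : exists q,
  [/\ rr_chain L (src :: q), last src q = w & chain_weight L (src :: q) <= 3 * n].
Proof.
have [adj_sym [_ conn]] := adj_conn.
have [q [adj_q <- sparse]] := exists_sparse_path adj_sym (conn src w).
exists q; split=> //; last exact: sparse_chain_weight.
by rewrite /rr_chain /= (eq_path (e' := adj)) // => v u; have [_ ->] := L_rr v.
Qed.

Variables (src : 'I_n) (exch : bool).

Lemma sync_reach w : w \in sync_informed exch L src (3 * n).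
Proof.
have [q [chain_q <- weight_q]] := exists_light_chain src w.
pose B := (3 * n).+1.
pose P r := potential L B (src :: q) (sync_informed exch L src r) (fun=> r).
have P0_lt : P 0 < B by rewrite ltnS (leq_trans (potential_source _ _ chain_q)).
have [|r le_rP0 /(potential_eq0 src (ltn0Sn _))] := descent_reaches0 P0_lt.
  move=> r /(potential_decr chain_q) [a decr]; exact/decr/sync_round_action.
apply/subsetP; apply: sync_informed_mono.
exact: leq_trans le_rP0 P0_lt.
Qed.

Lemma async_unfinished_le w N :
  \sum_(g : {ffun 'I_N -> 'I_n})
     (w \notin async_informed exch L src [seq g i | i <- enum 'I_N])
  <= few_hits n.-1 N (3 * n).
Proof.
have [q [chain_q last_q weight_q]] := exists_light_chain src w.
pose B := (3 * n).+1.
pose pot (st : {set 'I_n} * ('I_n -> nat)) := potential L B (src :: q) st.1 st.2.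
pose s0 := ([set src], fun _ : 'I_n => 0).
have pot_s0 : pot s0 <= 3 * n := leq_trans (potential_source _ _ chain_q) weight_q.
apply: leq_trans (_ : unfinished_runs (async_step exch L) pot N s0 <= _).
  apply: leq_sum => g _; case: posnP => [/(potential_eq0 src (ltn0Sn _))|_].
    by rewrite /= last_q => ->.
  by case: (_ \notin _).
have pot_step_le st a : pot (async_step exch L st a) <= pot st.
  case: st => I c; apply: potential_nonincr chain_q (async_step_action _ _ _ _ _) _.
  by move=> x /negbTE /= ->.
have pot_step_lt st : 0 < pot st < B -> exists a, pot (async_step exch L st a) < pot st.
  case: st => I c /(potential_decr chain_q) [a decr].
  by exists a; apply: decr (async_step_action _ _ _ _ _).
have pot_s0_lt : pot s0 < B by rewrite ltnS.
apply: leq_trans (unfinished_runs_le pot_step_le pot_step_lt N pot_s0_lt) _.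
exact: few_hits_mono.
Qed.

Lemma async_successes_ge N :
  n ^ N <= #|[set g : {ffun 'I_N -> 'I_n} |
               async_informed exch L src [seq g i | i <- enum 'I_N] == [set: 'I_n]]|
           + n * few_hits n.-1 N (3 * n).
Proof.
pose informed (g : {ffun 'I_N -> 'I_n}) := async_informed exch L src [seq g i | i <- enum 'I_N].
set succ := [set g | _].
rewrite -{1}(card_ord n) -{1}(card_ord N) -card_ffun -(cardsC succ) leq_add2l.
rewrite -sum1_card big_mkcond /=.
apply: leq_trans (_ : \sum_g \sum_(w : 'I_n) (w \notin informed g) <= _).
  by apply: leq_sum => g _; rewrite !inE; apply: neq_setT_le_sum.
rewrite exchange_big /= -[X in X * _](card_ord n) -sum_nat_const.
by apply: leq_sum => w _; apply: async_unfinished_le.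
Qed.

End Broadcast.

Local Open Scope R_scope.

Lemma INR_expn (m k : nat) : INR (m ^ k)%N = INR m ^ k.
Proof. by elim: k => // k IH; rewrite expnS mulnE mult_INR IH. Qed.

Lemma exp_pow (x : R) (k : nat) : exp x ^ k = exp (INR k * x).
Proof.
elim: k => [|k IH]; first by rewrite Rmult_0_l exp_0.
by rewrite S_INR [exp x ^ _]/= IH -exp_plus; f_equal; ring.
Qed.

Lemma pow_one_sub_inv_le (m k : nat) :
  (0 < m)%N -> (1 - / INR m) ^ (m * k) <= exp (-1) ^ k.
Proof.
move=> m_gt0; have m_ge1 : 1 <= INR m by apply: (le_INR 1); apply/leP.
rewrite mulnE pow_mult; apply: pow_incr; split.
  by apply: pow_le; have := Rinv_le_contravar _ _ Rlt_0_1 m_ge1; rewrite Rinv_1; lra.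
apply: Rle_trans (_ : exp (- / INR m) ^ m <= _).
  apply: pow_incr; split; last exact: exp_ineq1_le.
  by have := Rinv_le_contravar _ _ Rlt_0_1 m_ge1; rewrite Rinv_1; lra.
by rewrite exp_pow; right; f_equal; field; lra.
Qed.

Lemma few_hits_ratio_le n : (0 < n)%N ->
  INR (few_hits n.-1 (6 * n * n) (3 * n)) / INR (n ^ (6 * n * n)) <= (2 / exp 1) ^ (3 * n).
Proof.
move=> n_gt0; set N := (6 * n * n)%N; set F := few_hits _ _ _.
have x_gt0 : 0 < INR n by apply: lt_0_INR; apply/ltP.
have xN_gt0 : 0 < INR n ^ N by apply: pow_lt.
have def_N : N = (2 * n * (3 * n))%N by rewrite /N; lia.
have bound : 2 ^ N * INR F <= 2 ^ (3 * n) * (2 * INR n - 1) ^ N.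
  have := few_hits_bound n.-1 N (3 * n); move/leP/le_INR.
  rewrite !mult_INR !INR_expn.
  have -> : INR (2 * n.-1 + 1) = 2 * INR n - 1.
    have /(f_equal INR) : (2 * n.-1 + 1 + 1 = 2 * n)%N by lia.
    by rewrite -!plusE !plus_INR /=; lra.
  by have -> : INR 2 = 2 by simpl; lra.
have split_pow : (2 * INR n - 1) ^ N = 2 ^ N * INR n ^ N * (1 - / INR (2 * n)) ^ N.
  rewrite -!Rpow_mult_distr mult_INR; f_equal; simpl; field; lra.
have ratio : INR F / INR n ^ N <= 2 ^ (3 * n) * (1 - / INR (2 * n)) ^ N.
  apply/(Rmult_le_reg_l (2 ^ N)); first by apply: pow_lt; lra.
  rewrite /Rdiv -Rmult_assoc; apply/(Rmult_le_reg_r (INR n ^ N)) => //.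
  rewrite Rmult_assoc Rinv_l; last lra.
  by move: bound; rewrite split_pow; nra.
rewrite INR_expn; apply: Rle_trans ratio _.
rewrite def_N /Rdiv Rpow_mult_distr -exp_Ropp.
apply: Rmult_le_compat_l; first by apply: pow_le; lra.
by apply: pow_one_sub_inv_le; lia.
Qed.

Lemma ratio_ge_one_sub (S F n M : nat) (q : R) : (0 < M)%N -> (M <= S + n * F)%N ->
  INR F / INR M <= q -> Rge (INR S / INR M) (1 - INR n * q).
Proof.
move=> M_gt0 /leP/le_INR; rewrite -plusE plus_INR mulnE mult_INR => le_M ratio.
have M_pos : 0 < INR M by apply: lt_0_INR; apply/ltP.
have n_ge0 := pos_INR n.
apply: Rle_ge; apply: Rle_trans (_ : 1 - INR n * (INR F / INR M) <= _).
  by apply: Rplus_le_compat_l; apply: Ropp_le_contravar; apply: Rmult_le_compat_l.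
apply/(Rmult_le_reg_r (INR M)) => //.
rewrite Rmult_minus_distr_r /Rdiv !Rmult_assoc Rinv_l; lra.
Qed.

Theorem theorem5 :
  exists C : nat,
    forall (n : nat) (adj : rel 'I_n) (L : 'I_n -> seq 'I_n) (src : 'I_n) (exch : bool),
      connected_graph adj -> rr_lists adj L ->
      Rge (async_success_prob exch L src (C * n))
          (Rminus 1 (Rmult (INR n) (pow (Rdiv 2 (exp 1)) (3 * n))))
      /\ sync_informed exch L src (C * n) = [set: 'I_n].
Proof.
exists 6%N => n adj L src exch adj_conn L_rr; split.
  have n_gt0 : (0 < n)%N := leq_ltn_trans (leq0n src) (ltn_ord src).
  apply: ratio_ge_one_sub (few_hits_ratio_le n_gt0); first by rewrite expn_gt0 n_gt0.
  exact (async_successes_ge adj_conn L_rr src exch _).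
apply/setP => w; rewrite inE; apply: subsetP (sync_reach adj_conn L_rr src exch w).
by apply: sync_informed_mono; rewrite leq_mul2r orbT.
Qed.
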